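(* Let $(k,\alpha)\in\Upsilon$, $w\in\operatorname{lext}(L_{k,\alpha})$, $\bar w\in\operatorname{lext}(w,L_{k,\alpha})$, let $x\in\Sigma_k$ be a letter that is a recurrent factor of $\bar w$, and let $t$ be a left infinite $\alpha$-power free word over $\Sigma_k$ with $\operatorname{occur}(t,x)=0$. Then there are finite words $w_1,w_2,g\in\Sigma_k^*$ such that $(w_1^R,w_2^R,x,g^R,t^R)\in\Gamma(k,\alpha)$, $w$ is a suffix of $gxw_2w_1$, and the left infinite word $txw_2w_1$ is $\alpha$-power free.
   Context: $\Sigma_k$ is an alphabet with $k$ letters. For a nonempty finite word $r$ and a rational $\beta\ge 1$ with $\beta|r|$ an integer, the $\beta$-power $r^\beta$ is the word $rr\cdots rt$ of length $\beta|r|$, where $t$ is a prefix of $r$. For rational $\alpha\ge1$, a word is $\alpha$-power free if it has no factor that is a $\beta$-power with $\beta\ge\alpha$, and $\alpha^+$-power free if it has no factor that is a $\beta$-power with $\beta>\alpha$; ''$\alpha$'' may denote a rational number or a symbol $\alpha^+$. $L_{k,\alpha}$ is the set of finite $\alpha$-power free words over $\Sigma_k$; an infinite word is $\alpha$-power free iff all its finite factors lie in $L_{k,\alpha}$; $L^{\mathbb N,R}_{k,\alpha}$ is the set of right infinite $\alpha$-power free words. $\Upsilon$ is the set of pairs: $(k,\alpha)$ with $k=3$ and rational $\alpha>2$; $(k,\alpha)$ with $k>3$ and rational $\alpha\ge2$; $(k,\alpha^+)$ with $k\ge3$ and rational $\alpha\ge2$. $\operatorname{occur}(w,s)$ is the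 number of occurrences of a nonempty word $s$ as a factor of $w$; $s$ is recurrent in an infinite word $w$ if $\operatorname{occur}(w,s)=\infty$. A word $w\in L$ is left extendable in $L$ if for every $n$ there is $u\in L$ with $|u|=n$ and $uw\in L$; $\operatorname{lext}(L)$ is the set of such words, and for $w\in\operatorname{lext}(L)$, $\operatorname{lext}(w,L)$ is the set of left infinite words all of whose finite suffixes lie in $L$ and which have $w$ as a suffix. The reversal $w^R$: if $w=w_1\cdots w_m$ then $w^R=w_m\cdots w_1$; if $w=\cdots w_2w_1$ is left infinite then $w^R=w_1w_2\cdots$ is right infinite (and conversely). For $(k,\alpha)\in\Upsilon$, $(w_1,w_2,x,g,t)\in\Gamma(k,\alpha)$ means: $w_1,w_2,g\in\Sigma_k^*$; $x\in\Sigma_k$; $w_1w_2xg\in L_{k,\alpha}$; $t\in L^{\mathbb N,R}_{k,\alpha}$; $\operatorname{occur}(t,x)=0$; $g$ is a prefix of $t$; $\operatorname{occur}(w_2xgy,xgy)=1$, where $y\in\Sigma_k$ is the letter with $gy$ a prefix of $t$; and $\operatorname{occur}(w_2,x)\ge\operatorname{occur}(w_1,x)$. *)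

From mathcomp Require Import all_boot all_order all_algebra.
Set Implicit Arguments. Unset Strict Implicit. Unset Printing Implicit Defensive.
Import Order.TTheory GRing.Theory Num.Theory.

(* Conventions:
   - The alphabet Sigma_k is 'I_k; finite words are seq 'I_k.
   - A right infinite word t = t_0 t_1 ... is a function nat -> T (t i = t_i).
   - A left infinite word ... u_2 u_1 u_0 is represented by the function
     f : nat -> T with f i = u_i (i-th letter counted from the right).
     Hence the reversal of a left infinite word is the right infinite word
     given by the very same function. *)

(* An exponent: either a rational alpha (plus = false) or alpha^+ (plus = true). *)
Record expo := Expo { ex_val : rat; ex_plus : bool }.

Local Open Scope ring_scope.

Definition forbidden (e : expo) (beta : rat) : bool :=
  if ex_plus e then ex_val e < beta else ex_val e <= beta.

Section Words.
Variable T : eqType.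

Definition is_power (r u : seq T) (beta : rat) : Prop :=
  (0 < size r)%N /\ 1 <= beta /\ beta * (size r)%:R = (size u)%:R /\
  forall i, (i < size u)%N -> onth u i = onth r (i %% size r).

Definition pfree (e : expo) (u : seq T) : Prop :=
  forall s r beta, infix s u -> is_power r s beta -> ~~ forbidden e beta.

Definition occur (w s : seq T) : nat :=
  count (fun i => take (size s) (drop i w) == s) (iota 0 (size w).+1).

Definition rfactor (f : nat -> T) (i n : nat) : seq T := mkseq (fun j => f (i + j)) n.

Definition lfactor (f : nat -> T) (i n : nat) : seq T := rev (rfactor f i n).

Definition pfree_right (e : expo) (f : nat -> T) : Prop :=
  forall i n, pfree e (rfactor f i n).

Definition pfree_left (e : expo) (f : nat -> T) : Prop :=
  forall i n, pfree e (lfactor f i n).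

Definition occurs_right (f : nat -> T) (i : nat) (s : seq T) : Prop :=
  rfactor f i (size s) = s.
Definition occurs_left (f : nat -> T) (i : nat) (s : seq T) : Prop :=
  lfactor f i (size s) = s.

Definition recurrent_left (f : nat -> T) (s : seq T) : Prop :=
  forall N, exists i, (N <= i)%N /\ occurs_left f i s.

Definition in_lext (e : expo) (w : seq T) : Prop :=
  pfree e w /\ forall n, exists u, size u = n /\ pfree e u /\ pfree e (u ++ w).

Definition in_lext_w (e : expo) (w : seq T) (f : nat -> T) : Prop :=
  (forall n, pfree e (lfactor f 0 n)) /\ lfactor f 0 (size w) = w.

(* the left infinite word f u (finite word u appended on the right of f) *)
Definition lcat (f : nat -> T) (u : seq T) : nat -> T :=
  fun i => if (i < size u)%N then nth (f 0%N) (rev u) i else f (i - size u)%N.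

Definition Gamma (e : expo) (w1 w2 : seq T) (x : T) (g : seq T) (t : nat -> T) : Prop :=
  let y := t (size g) in
  pfree e (w1 ++ w2 ++ x :: g) /\
  pfree_right e t /\
  (forall i, ~ occurs_right t i [:: x]) /\
  rfactor t 0 (size g) = g /\
  occur (w2 ++ x :: g ++ [:: y]) (x :: g ++ [:: y]) = 1%N /\
  (occur w1 [:: x] <= occur w2 [:: x])%N.

End Words.

Definition Upsilon (k : nat) (e : expo) : Prop :=
  [\/ (k = 3%N /\ ex_plus e = false /\ 2 < ex_val e),
      ((3 < k)%N /\ ex_plus e = false /\ 2 <= ex_val e)
      | ((3 <= k)%N /\ ex_plus e = true /\ 2 <= ex_val e)].

From Pilot Require Import Defs.
From mathcomp Require Import all_boot all_order all_algebra.
From mathcomp Require Import zify.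
From Stdlib Require Import Classical.
Set Implicit Arguments. Unset Strict Implicit. Unset Printing Implicit Defensive.
Import Order.TTheory GRing.Theory Num.Theory.

(* Take w1 empty, an occurrence P >= |w| of x in wbar, w2 the P letters right of that
   x (so w is a suffix of x w2), and g the length-P suffix of t; the spliced word is
   t x w2.  As alpha >= 2, a forbidden power of period p in it has length at least 2p.
   If it lies neither inside t nor inside wbar, it contains the x at position P and,
   t being x-free, reaches fewer than p letters into t; hence it also contains the x
   at P - p, preceded (by periodicity) by l letters that agree with the last l letters
   of t.  If P is chosen so that such an agreement at a nearby earlier x always
   transfers to P itself, the power is a factor of wbar, a contradiction.  Such
   positions occur arbitrarily far left: take a record of the agreement lengths if
   they are unbounded, and otherwise a late occurrence of their eventual maximum.
   Since g y is x-free, x g y occurs only once in w2 x g y. *)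

Section PowerFreeWords.
Variable T : eqType.
Implicit Types (s u : seq T) (f : nat -> T).

Definition has_period u p := forall j, (j + p < size u)%N -> onth u j = onth u (j + p).

Lemma has_period_mod u p i : (0 < p)%N -> has_period u p -> (i < size u)%N ->
  onth u i = onth u (i %% p).
Proof.
move=> p_gt0 per; elim/ltn_ind: i => i IH i_lt.
have [i_ltp|le_pi] := ltnP i p; first by rewrite modn_small.
have -> : i = (i - p + p)%N by lia.
rewrite -per ?modnDr; last by lia.
by apply: IH; lia.
Qed.

Lemma onth_rev u j : (j < size u)%N -> onth (rev u) j = onth u (size u - j.+1).
Proof. by move=> j_lt; rewrite !onthE map_rev nth_rev size_map. Qed.

Lemma has_period_rev u p : has_period u p -> has_period (rev u) p.
Proof.
move=> per j; rewrite size_rev => lt_jp.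
rewrite !onth_rev; try lia.
have -> : (size u - j.+1 = (size u - (j + p).+1) + p)%N by lia.
by rewrite -per //; lia.
Qed.

Lemma pfreeP e s : pfree e s <->
  forall u p, infix u s -> (0 < p)%N -> (p <= size u)%N -> has_period u p ->
    ~~ forbidden e ((size u)%:R / p%:R)%R.
Proof.
have p_pos (p : nat) : (0 < p)%N -> (0 < p%:R :> rat)%R by rewrite ltr0n.
split=> [free u p u_s p_gt0 le_pu per | free u r beta u_s [r_gt0 [beta_ge1 [beta_r per]]]].
  apply: (free u (take p u)) => //; split; first by rewrite size_takel.
  split; first by rewrite ler_pdivlMr ?p_pos // mul1r ler_nat.
  split; first by rewrite size_takel // mulfVK // gt_eqF ?p_pos.
  move=> i i_lt; rewrite size_takel // (has_period_mod p_gt0 per i_lt).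
  by rewrite !onthE map_take nth_take // ltn_pmod.
have -> : beta = ((size u)%:R / (size r)%:R)%R by rewrite -beta_r mulfK // gt_eqF ?p_pos.
have le_ru : (size r <= size u)%N.
  by rewrite -(ler_nat rat) -beta_r -{1}(mul1r (size r)%:R)%R ler_pM2r ?p_pos.
apply: free => // j lt_j; rewrite !per; try lia.
by rewrite modnDr.
Qed.

Lemma pfree_rev e s : pfree e (rev s) <-> pfree e s.
Proof.
suff rev_free s' : pfree e s' -> pfree e (rev s').
  by split=> /rev_free //; rewrite revK.
move/pfreeP=> free; apply/pfreeP => u p; rewrite -infix_revLR => u_s p_gt0 le_pu per.
rewrite -size_rev; apply: free; rewrite ?size_rev //.
exact: has_period_rev.
Qed.

Definition power_free e f := forall a m p, (0 < p)%N -> (p <= m)%N ->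
  has_period (rfactor f a m) p -> ~~ forbidden e (m%:R / p%:R)%R.

(* In Defs, [rfactor] adds indices in ring_scope; this restates it with [addn]. *)
Lemma rfactorE f i n : rfactor f i n = mkseq (fun j => f (i + j)%N) n.
Proof. by []. Qed.

Lemma size_rfactor f i n : size (rfactor f i n) = n.
Proof. exact: size_mkseq. Qed.

Lemma rfactorD f i a b : rfactor f i (a + b) = rfactor f i a ++ rfactor f (i + a) b.
Proof.
rewrite !rfactorE /mkseq iotaD map_cat add0n -[in iota a b](addn0 a) iotaDl -map_comp.
by congr (_ ++ _); apply: eq_map => j /=; rewrite addnA.
Qed.

Lemma rfactor_ext f g i i' n : (forall j, (j < n)%N -> f (i + j) = g (i' + j)) ->
  rfactor f i n = rfactor g i' n.
Proof. by move=> fg; rewrite !rfactorE; apply/eq_in_map => j; rewrite mem_iota => /fg. Qed.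

Lemma rfactor1 f i : rfactor f i 1 = [:: f i].
Proof. by rewrite rfactorE /mkseq /= addn0. Qed.

Lemma lfactor1 f i : lfactor f i 1 = [:: f i].
Proof. by rewrite /lfactor rfactor1. Qed.

Lemma rfactorS f i n : rfactor f i n.+1 = rcons (rfactor f i n) (f (i + n)%N).
Proof. by rewrite rfactorE mkseqS. Qed.

Lemma size_lfactor f i n : size (lfactor f i n) = n.
Proof. by rewrite size_rev size_rfactor. Qed.

Lemma rev_lfactor f i n : rev (lfactor f i n) = rfactor f i n.
Proof. exact: revK. Qed.

Lemma suffix_lfactor f i m n : (m <= n)%N -> suffix (lfactor f i m) (lfactor f i n).
Proof. by move=> le_mn; rewrite suffix_rev -(subnKC le_mn) rfactorD prefix_prefix. Qed.

Lemma lfactorS f i n : lfactor f i n.+1 = f (i + n) :: lfactor f i n.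
Proof. by rewrite /lfactor rfactorS rev_rcons. Qed.

Lemma has_period_rfactor f a m p : has_period (rfactor f a m) p <->
  forall j, (j + p < m)%N -> f (a + j) = f (a + j + p).
Proof.
have onth_rf j : (j < m)%N -> onth (rfactor f a m) j = Some (f (a + j)).
  by move=> j_lt; rewrite onthE (nth_map (f 0)) ?size_rfactor // rfactorE nth_mkseq.
rewrite /has_period size_rfactor; split=> per j lt_jp.
  by have := per j lt_jp; rewrite !onth_rf ?addnA; [case | lia | lia].
by rewrite !onth_rf ?addnA ?per //; lia.
Qed.

Lemma infix_rfactor f i n u : infix u (rfactor f i n) ->
  exists a, u = rfactor f a (size u).
Proof.
case/infixP=> s1 [s2 split_f]; exists (i + size s1)%N.
have n_eq : n = (size s1 + size u + size s2)%N.
  by rewrite -(size_rfactor f i n) split_f !size_cat addnA.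
move: split_f; rewrite n_eq !rfactorD -catA => /eqP.
rewrite eqseq_cat ?size_rfactor // eqseq_cat ?size_rfactor //.
by case/and3P=> _ /eqP.
Qed.

Lemma pfree_rfactor e f i n : power_free e f -> pfree e (rfactor f i n).
Proof.
move=> free; apply/pfreeP => u p /infix_rfactor[a ->] p_gt0.
by rewrite !size_rfactor; apply: free.
Qed.

Lemma power_free_rfactor e f : (forall n, pfree e (rfactor f 0 n)) -> power_free e f.
Proof.
move=> free a m p p_gt0 le_pm per; have /pfreeP := free (a + m)%N.
rewrite -(size_rfactor f a m); apply=> //; last by rewrite size_rfactor.
by rewrite size_rfactor rfactorD add0n suffix_infix.
Qed.

Lemma pfree_lfactor e f i n : power_free e f -> pfree e (lfactor f i n).
Proof. by move=> free; apply/pfree_rev/pfree_rfactor. Qed.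

Lemma power_free_lfactor e f : (forall n, pfree e (lfactor f 0 n)) -> power_free e f.
Proof. by move=> free; apply: power_free_rfactor => n; apply/pfree_rev/free. Qed.

End PowerFreeWords.

Section Splice.
Variable T : eqType.
Implicit Types (s u v : seq T) (f t : nat -> T).

Lemma lcat_lfactor t f n i : lcat t (lfactor f 0 n) i = if (i < n)%N then f i else t (i - n)%N.
Proof.
rewrite /lcat /lfactor revK size_rev size_rfactor.
by case: ifP => // i_lt; rewrite rfactorE nth_mkseq.
Qed.

Lemma rfactor_lcat t u m : rfactor (lcat t u) 0 (size u + m) = rev u ++ rfactor t 0 m.
Proof.
rewrite rfactorD; congr (_ ++ _).
  rewrite rfactorE -{1}[rev u](mkseq_nth (t 0)) size_rev.
  by apply/eq_in_map => j; rewrite mem_iota /lcat add0n => /= ->.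
rewrite !rfactorE; apply: eq_mkseq => j.
by rewrite /lcat !add0n ltnNge leq_addr /= addKn.
Qed.

Lemma occur_cons_notin x s v : x \notin s -> (size v <= size s)%N ->
  occur (v ++ x :: s) (x :: s) = 1%N.
Proof.
move=> xNs le_vs; rewrite /occur (@eq_in_count _ _ (pred1 (size v))).
  by rewrite count_uniq_mem ?iota_uniq // mem_iota size_cat /=; lia.
move=> i; rewrite mem_iota size_cat /= => i_lt.
have [lt_iv|lt_vi|->] := ltngtP i (size v); last first.
- by rewrite drop_size_cat // take_oversize ?eqxx.
- apply: negbTE; apply/eqP => /(congr1 size); rewrite size_take size_drop size_cat /=.
  by case: ifP; lia.
apply: negbTE; apply/eqP => /(congr1 (nth x ^~ (size v - i)%N)).
rewrite nth_take /=; last by lia.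
rewrite nth_drop subnKC ?(ltnW lt_iv) // nth_cat ltnn subnn /=.
have -> : (size v - i = (size v - i).-1.+1)%N by lia.
move=> /= x_nth; move: xNs; rewrite {1}x_nth mem_nth //; lia.
Qed.

Lemma Gamma_splice e t x u n : power_free e t -> power_free e (lcat t (x :: u)) ->
  (forall i, t i != x) -> (size u <= n.+1)%N -> Gamma e [::] (rev u) x (rfactor t 0 n) t.
Proof.
move=> t_free splice_free t_neq_x le_un; rewrite /Gamma /= size_rfactor.
split; last split; [|by move=> i m; apply: pfree_rfactor|].
  by rewrite -cat_rcons -rev_cons -rfactor_lcat; apply: pfree_rfactor.
split=> [i|]; first by rewrite /occurs_right rfactor1 => -[/eqP]; rewrite (negbTE (t_neq_x i)).
split=> //; split=> //; rewrite cats1 -[t n]/(t (0 + n)%N) -rfactorS.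
apply: occur_cons_notin; rewrite ?size_rev ?size_rfactor //.
by apply/mapP => -[j _ /eqP]; rewrite eq_sym (negbTE (t_neq_x _)).
Qed.

End Splice.

Definition agree (T : Type) (f t : nat -> T) q l :=
  forall j, (j < l)%N -> f (q.+1 + j) = t j.

(* The occurrences q of x constrained here are exactly those that a power straddling
   position P can reach. *)
Definition admissible_cut (T : Type) (f t : nat -> T) x P :=
  forall q l, (q < P)%N -> f q = x -> agree f t q l -> (P <= 2 * q + 1 + l)%N ->
    agree f t P l.

Section SplicePowerFree.
Variables (T : eqType) (e : expo) (f t : nat -> T) (x : T) (P : nat).
Hypothesis forbidden_square : forall m p, (0 < p)%N ->
  forbidden e (m%:R / p%:R)%R -> (2 * p <= m)%N.
Hypotheses (t_free : power_free e t) (f_free : power_free e f).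
Hypotheses (t_neq_x : forall i, t i != x) (fP : f P = x) (cut : admissible_cut f t x P).

Let G := lcat t (lfactor f 0 P.+1).

Lemma splice_f i : (i <= P)%N -> G i = f i.
Proof. by rewrite /G lcat_lfactor ltnS => ->. Qed.

Lemma splice_t j : G (P.+1 + j) = t j.
Proof. by rewrite /G lcat_lfactor ltnNge leq_addr addKn. Qed.

Lemma agree_straddling_window a m p : (0 < p)%N -> (2 * p <= m)%N -> (a <= P)%N ->
  (forall j, (j + p < m)%N -> G (a + j) = G (a + j + p)) -> agree f t P (a + m - P.+1).
Proof.
move=> p_gt0 le_2pm le_aP per.
have [le_amP|lt_Pam] := leqP (a + m) P.+1.
  by move=> j; rewrite (eqP le_amP) ltn0.
set l := (a + m - P.+1)%N.
have per' i : (a <= i)%N -> (i + p < a + m)%N -> G i = G (i + p).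
  by move=> le_ai lt_ipm; have := per (i - a)%N; rewrite subnKC //; apply; lia.
have lt_lp : (l < p)%N.
  rewrite ltnNge; apply/negP => le_pl; have := per' P le_aP ltac:(lia).
  rewrite splice_f // fP (_ : P + p = P.+1 + p.-1)%N ?splice_t; last by lia.
  by move/esym/eqP; rewrite (negbTE (t_neq_x _)).
have fq : f (P - p) = x.
  have := per' (P - p)%N ltac:(lia) ltac:(lia); rewrite (_ : P - p + p = P)%N; last by lia.
  by rewrite !splice_f ?fP ?leq_subr.
apply: (cut (q := (P - p)%N)) => //; try lia.
move=> j lt_jl; rewrite -splice_f; last by lia.
rewrite per'; try lia.
by rewrite (_ : (P - p).+1 + j + p = P.+1 + j)%N ?splice_t //; lia.
Qed.

Lemma splice_window a m p : (0 < p)%N -> (2 * p <= m)%N -> has_period (rfactor G a m) p ->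
  rfactor G a m = rfactor t (a - P.+1) m \/ rfactor G a m = rfactor f a m.
Proof.
move=> p_gt0 le_2pm /has_period_rfactor per.
have [lt_Pa|le_aP] := ltnP P a.
  left; apply: rfactor_ext => j _.
  by rewrite (_ : a + j = P.+1 + (a - P.+1 + j))%N ?splice_t //; lia.
right; apply: rfactor_ext => j lt_jm.
have [le_ajP|lt_Paj] := leqP (a + j) P; first exact: splice_f.
have agreeP := agree_straddling_window p_gt0 le_2pm le_aP per.
rewrite (_ : a + j = P.+1 + (a + j - P.+1))%N ?splice_t ?agreeP //; lia.
Qed.

Lemma power_free_splice : power_free e G.
Proof.
move=> a m p p_gt0 le_pm per; apply/negP => forb.
have [E|E] := splice_window p_gt0 (forbidden_square p_gt0 forb) per; rewrite E in per.
  by have := t_free p_gt0 le_pm per; rewrite forb.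
by have := f_free p_gt0 le_pm per; rewrite forb.
Qed.

End SplicePowerFree.

Section Records.
Variables (X : pred nat) (f : nat -> nat).
Hypothesis X_inf : forall N, exists i, (N <= i)%N /\ X i.

Lemma eventual_max_attained c n0 : (forall q, (n0 <= q)%N -> X q -> (f q <= c)%N) ->
  exists v n1, (forall q, (n1 <= q)%N -> X q -> (f q <= v)%N) /\
               (forall N, exists q, [/\ (N <= q)%N, X q & f q = v]).
Proof.
elim: c n0 => [|c IH] n0 bound.
  exists 0%N, n0; split=> [q le_q Xq|N]; first exact: bound.
  have [q [le_q Xq]] := X_inf (maxn N n0); exists q; split=> //; first lia.
  by have := bound q ltac:(lia) Xq; lia.
have [attained|] := classic (forall N, exists q, [/\ (N <= q)%N, X q & f q = c.+1]).
  by exists c.+1, n0.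
case/not_all_ex_not=> N1 not_attained; apply: (IH (maxn n0 N1)) => q le_q Xq.
have := bound q ltac:(lia) Xq; rewrite leq_eqVlt ltnS => /orP[/eqP fq|//].
by case: not_attained; exists q; split=> //; lia.
Qed.

Lemma exists_record N : (forall c, exists q, X q /\ (c < f q)%N) ->
  exists P, [/\ (N <= P)%N, X P & forall q, (q < P)%N -> X q -> (f q < f P)%N].
Proof.
move=> unbounded; set K := \max_(q < N) f q.
have exP : exists q, X q && (K < f q)%N.
  by have [q [Xq lt_Kq]] := unbounded K; exists q; rewrite Xq.
case: (ex_minnP exP) => P /andP[XP lt_KP] minP; exists P; split=> //.
  rewrite leqNgt; apply/negP => lt_PN.
  by have := @leq_bigmax _ (fun i : 'I_N => f i) (Ordinal lt_PN); rewrite -/K /=; lia.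
move=> q lt_qP Xq; have : ~~ (K < f q)%N.
  by apply/negP => lt_Kq; have := minP q; rewrite Xq lt_Kq => /(_ isT); lia.
lia.
Qed.

Lemma exists_admissible N : exists P, [/\ (N <= P)%N, X P &
  forall q, (q < P)%N -> X q -> (P <= 2 * q + 1 + f q)%N -> (f q <= f P)%N].
Proof.
have [[c bound]|unbounded] := classic (exists c, forall q, X q -> (f q <= c)%N).
  have [v [n0 [le_v attained]]] := @eventual_max_attained c 0 (fun q _ => bound q).
  have [P [le_P XP fP]] := attained (N + 2 * n0 + c + 1)%N.
  exists P; split=> //; first lia.
  move=> q _ Xq le_P2q; rewrite fP; apply: (le_v q) => //.
  by have := bound q Xq; lia.
have [|P [le_P XP rec]] := exists_record N.
  move=> c; apply: NNPP => none; apply: unbounded; exists c => q Xq.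
  by rewrite leqNgt; apply/negP => lt_cq; apply: none; exists q.
by exists P; split=> // q lt_qP Xq _; apply/ltnW/rec.
Qed.

End Records.

Section ChooseCut.
Variables (T : eqType) (f t : nat -> T) (x : T).
Hypotheses (t_neq_x : forall i, t i != x) (x_rec : forall N, exists i, (N <= i)%N /\ f i = x).

Lemma disagree_exists q : exists l, f (q.+1 + l) != t l.
Proof.
have [i [le_i fi]] := x_rec q.+1; exists (i - q.+1)%N.
by rewrite subnKC // fi eq_sym t_neq_x.
Qed.

Definition agree_len q := ex_minn (disagree_exists q).

Lemma agree_lenP q l : agree f t q l <-> (l <= agree_len q)%N.
Proof.
rewrite /agree_len; case: ex_minnP => m fm minm; split=> [agr|le_lm j lt_jl].
  by rewrite leqNgt; apply/negP => /agr; apply/eqP.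
by apply/eqP/negPn/negP => /minm; lia.
Qed.

Lemma exists_admissible_cut N : exists P, [/\ (N <= P)%N, f P = x & admissible_cut f t x P].
Proof.
have X_inf M : exists i, (M <= i)%N /\ f i == x.
  by have [i [le_i /eqP fi]] := x_rec M; exists i.
have [P [le_P /eqP fP good]] := exists_admissible agree_len X_inf N.
exists P; split=> // q l lt_qP fq /agree_lenP le_l le_P2q; apply/agree_lenP.
have le_P2q' : (P <= 2 * q + 1 + agree_len q)%N by lia.
exact: leq_trans le_l (good q lt_qP (introT eqP fq) le_P2q').
Qed.

End ChooseCut.

Lemma Upsilon_forbidden_square k e : Upsilon k e -> forall m p, (0 < p)%N ->
  forbidden e (m%:R / p%:R)%R -> (2 * p <= m)%N.
Proof.
move=> ups m p p_gt0; have ge2 : (2 <= ex_val e)%R.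
  by case: ups => [[_ [_ /ltW]]|[_ [_]]|[_ [_]]].
have p_pos : (0 < p%:R :> rat)%R by rewrite ltr0n.
have : forbidden e (m%:R / p%:R)%R -> (2 <= m%:R / p%:R :> rat)%R.
  by rewrite /forbidden; case: ex_plus => [/ltW|]; apply: le_trans.
by move=> /[apply]; rewrite ler_pdivlMr // -natrM ler_nat mulnC.
Qed.

Theorem mainTheorem7 (k : nat) (e : expo) (w : seq 'I_k) (wbar : nat -> 'I_k)
    (x : 'I_k) (t : nat -> 'I_k) :
  Upsilon k e ->
  in_lext e w ->
  in_lext_w e w wbar ->
  recurrent_left wbar [:: x] ->
  pfree_left e t ->
  (forall i, ~ occurs_left t i [:: x]) ->
  exists w1 w2 g : seq 'I_k,
    [/\ Gamma e (rev w1) (rev w2) x (rev g) t,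
        suffix w (g ++ x :: w2 ++ w1) &
        pfree_left e (lcat t (x :: w2 ++ w1))].
Proof.
move=> ups _ [wbar_pfree w_suffix] wbar_rec t_pfree t_no_x.
have t_neq_x i : t i != x.
  by apply/eqP => tx; apply: (t_no_x i); rewrite /occurs_left lfactor1 tx.
have x_rec N : exists i, (N <= i)%N /\ wbar i = x.
  by have [i [le_i]] := wbar_rec N; rewrite /occurs_left lfactor1 => -[]; exists i.
have t_free : power_free e t := power_free_lfactor (t_pfree 0%N).
have wbar_free : power_free e wbar := power_free_lfactor wbar_pfree.
have [P [le_wP wbarP cut]] := exists_admissible_cut t_neq_x x_rec (size w).
have splice_free := power_free_splice (Upsilon_forbidden_square ups) t_free wbar_free
  t_neq_x wbarP cut.
have xw2 : x :: lfactor wbar 0 P = lfactor wbar 0 P.+1 by rewrite lfactorS wbarP.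
exists [::], (lfactor wbar 0 P), (lfactor t 0 P); rewrite cats0 [rev (lfactor t _ _)]rev_lfactor.
split; first by apply: Gamma_splice; rewrite ?xw2 ?size_lfactor.
  by rewrite xw2 -w_suffix; apply/suffix_catr/suffix_lfactor/leqW.
by rewrite xw2 => i n; apply: pfree_lfactor.
Qed.
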